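(* Let $R$, $G$, $*$, $\sigma$ and $\mathcal{S}$ be as in the context, and suppose $\mathcal{S}$ is anticommutative. Let $y\in G_*$, $x\in G\setminus G_*$, and $\alpha\in R$ with $\alpha y\in\mathcal{S}$. Then: - (i) $x^y\in\{x,x^*\}$; - (ii) $xy\in G_*$ if and only if $xy\neq yx$; - (iii) if $xy\neq yx$, then $\alpha(1+\sigma(x))=0$; if $xy=yx$, then $2\alpha=0$; - (iv) $(x,y^2)=(x^2,y)=(xx^*,y)=1$.
   Context: Throughout, $R$ is a commutative ring with unity with $\operatorname{char}(R)\neq 2$, and $\mathcal{U}(R)$ is its unit group. $G$ is a group with an involution $*$, i.e. a map $x\mapsto x^*$ with $(xy)^*=y^*x^*$ and $(x^* )^*=x$. The map $\sigma:G\to\mathcal{U}(R)$ is a nontrivial group homomorphism with kernel $N=\ker\sigma$, and it is compatible with $*$: $xx^*\in N$ for all $x\in G$. The group ring $RG$ carries the involution $\left(\sum_{x\in G}\alpha_x x\right)^{\sigma*}=\sum_{x\in G}\sigma(x)\alpha_x x^*$. Write $G_*=\{x\in G: x^*=x\}$ and $N_*=G_*\cap N$. Let $\mathcal{S}$ be the $R$-submodule of $RG$ spanned by the union of the following three sets: - $2\mathcal{S}_1=\{2x: x\in N_*\}$; - $\mathcal{S}_2=\{\alpha x: x\in G_*\setminus N,\ \alpha\in R,\ \alpha(1-\sigma(x))=0\}$; - $\mathcal{S}_3=\{x+\sigma(x)x^*: x\in G\setminus G_*\}$. $\mathcal{S}$ is called anticommutative if $ab+ba=0$ for all $a,b\in\mathcal{S}$.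 The conjugate of $x$ by $y$ is $x^y=y^{-1}xy$, and the commutator is $(x,y)=x^{-1}y^{-1}xy$. *)

From HB Require Import structures.
From mathcomp Require Import all_boot all_order all_algebra all_fingroup.
Set Implicit Arguments. Unset Strict Implicit. Unset Printing Implicit Defensive.
Import GRing.Theory.
Local Open Scope ring_scope.

(* The group ring RG is modelled by formal finite R-linear combinations of
   group elements: a list [:: (r_1, g_1); ...; (r_k, g_k)] stands for
   r_1 g_1 + ... + r_k g_k.  Two such lists denote the same element of RG iff
   they have the same coefficient function [rg_coef]. *)
Section GroupRing.
Variables (R : comNzRingType) (G : groupType).

Definition rg := seq (R * G).

Definition rg_coef (a : rg) (g : G) : R := \sum_(p <- a | p.2 == g) p.1.

Definition rg_mul (a b : rg) : rg :=
  [seq (p.1 * q.1, (p.2 * q.2)%g) | p <- a, q <- b].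

Definition rg_add (a b : rg) : rg := a ++ b.

Definition rg_scale (r : R) (a : rg) : rg := [seq (r * p.1, p.2) | p <- a].

Definition rg_eq (a b : rg) : Prop := forall g, rg_coef a g = rg_coef b g.

Definition S_gen (star : G -> G) (sigma : G -> R) (a : rg) : Prop :=
  (exists x : G, star x = x /\ sigma x = 1 /\ a = [:: (2%:R, x)]) \/
  (exists (x : G) (al : R), star x = x /\ sigma x != 1 /\
      al * (1 - sigma x) = 0 /\ a = [:: (al, x)]) \/
  (exists x : G, star x != x /\ a = [:: (1, x); (sigma x, star x)]).

Definition in_S (star : G -> G) (sigma : G -> R) (a : rg) : Prop :=
  exists l : seq (R * rg),
    (forall p, p \in l -> S_gen star sigma p.2) /\
    rg_eq a (flatten [seq rg_scale p.1 p.2 | p <- l]).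

Definition S_anticomm (star : G -> G) (sigma : G -> R) : Prop :=
  forall a b, in_S star sigma a -> in_S star sigma b ->
    rg_eq (rg_add (rg_mul a b) (rg_mul b a)) [::].

End GroupRing.

From HB Require Import structures.
From mathcomp Require Import all_boot all_order all_algebra all_fingroup.
From mathcomp Require Import ring.
Import GRing.Theory.
Local Open Scope ring_scope.

(* Everything follows by comparing coefficients in anticommutation relations.
   Write x' for star x and let x lie outside G_*, so s = x + sigma(x) x' is in
   S.  In 2 s^2 = 0 the coefficients of x^2 and x x' give x'^2 = x^2,
   x x' = x' x and 4 = 0.  In s (b y) + (b y) s = 0 the coefficient of
   x y = y x^y is b (1 + [x^y = x] + sigma(x) [x^y = x']); some b y lies in S
   with b <> 0 (b = 2 or 1 + sigma(y), as sigma(y)^2 = 1 and 4 = 0), so x^y is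
   x or x', whence (ii), and the same coefficient with b = alpha gives (iii).
   Conjugation by y is injective, hence permutes {x, x'}: x'^y = star (x^y),
   which yields (iv). *)

Set Implicit Arguments.
Unset Strict Implicit.

Section GroupRing.
Variables (R : comNzRingType) (G : groupType).

Lemma rg_coef_nil (g : G) : rg_coef ([::] : rg R G) g = 0.
Proof. by rewrite /rg_coef big_nil. Qed.

Lemma rg_coef_cons (r : R) (h : G) (a : rg R G) (g : G) :
  rg_coef ((r, h) :: a) g = (h == g)%:R * r + rg_coef a g.
Proof. by rewrite /rg_coef big_cons /=; case: eqP; rewrite ?mul1r ?mul0r ?add0r. Qed.

Lemma rg_coef_cat (a b : rg R G) (g : G) :
  rg_coef (a ++ b) g = rg_coef a g + rg_coef b g.
Proof. by rewrite /rg_coef big_cat. Qed.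

Lemma rg_scale1 (a : rg R G) : rg_scale 1 a = a.
Proof. by elim: a => //= -[r h] a ->; rewrite mul1r. Qed.

Lemma S_gen_in_S star sigma (a : rg R G) : S_gen star sigma a -> in_S star sigma a.
Proof.
move=> Sa; exists [:: (1, a)]; split; first by move=> p; rewrite inE => /eqP->.
by move=> g; rewrite /= cats0 rg_scale1.
Qed.

End GroupRing.

Section Anticommutative.
Variables (R : comNzRingType) (G : groupType) (star : G -> G) (sigma : G -> R).
Hypothesis sigma_unit : forall x : G, exists u : R, sigma x * u = 1.
Hypothesis S_anti : S_anticomm star sigma.

Definition S3_elem (x : G) : rg R G := [:: (1, x); (sigma x, star x)].

Lemma sigma_lreg (x : G) : GRing.lreg (sigma x).
Proof.
have [u sigma_u] := sigma_unit x.
by move=> a b /(congr1 ( *%R u)); rewrite !mulrA ![u * _]mulrC sigma_u !mul1r.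
Qed.

Lemma S3_elem_in_S (x : G) : star x != x -> in_S star sigma (S3_elem x).
Proof. by move=> x_nsym; apply: S_gen_in_S; right; right; exists x. Qed.

Lemma S3_single_anticomm_coef (x y : G) (b : R) :
  star x != x -> in_S star sigma [:: (b, y)] ->
  b * (1 + (x ^ y == x)%g%:R + (x ^ y == star x)%g%:R * sigma x) = 0.
Proof.
move=> x_nsym Sb; move: (S_anti (S3_elem_in_S x_nsym) Sb (x * y)%g).
rewrite /rg_add /rg_mul /= !rg_coef_cons rg_coef_nil eqxx (inj_eq (mulIg y)) (negbTE x_nsym).
rewrite [(x * y)%g]conjgC !(inj_eq (mulgI y)) ![(_ == x ^ y)%g]eq_sym => <- /=; ring.
Qed.

Lemma S3_elem_sqr_coef (x g : G) : star x != x ->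
  2%:R * rg_coef (rg_mul (S3_elem x) (S3_elem x)) g = 0.
Proof.
move=> x_nsym; have S3x := S3_elem_in_S x_nsym.
have := S_anti S3x S3x g; rewrite /rg_add rg_coef_cat rg_coef_nil => <-; ring.
Qed.

Hypothesis two_neq0 : (2%:R : R) != 0.

Lemma star_sqr (x : G) : star x != x -> (star x * star x = x * x)%g.
Proof.
move=> x_nsym; apply/eqP/negPn/negP => ne; move/eqP: two_neq0; apply.
move: (S3_elem_sqr_coef (x * x)%g x_nsym).
rewrite /rg_mul /= !rg_coef_cons rg_coef_nil eqxx (inj_eq (mulgI x) (star x)).
by rewrite (inj_eq (mulIg x) (star x)) (negbTE ne) (negbTE x_nsym) /= => <-; ring.
Qed.

Lemma S3_elem_sqr_coef_mul_star (x : G) : star x != x ->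
  sigma x * (2%:R * (1 + (star x * x == x * star x)%g%:R)) = 0.
Proof.
move=> x_nsym; move: (S3_elem_sqr_coef (x * star x)%g x_nsym).
rewrite /rg_mul /= !rg_coef_cons rg_coef_nil eqxx (inj_eq (mulgI x) x).
rewrite (inj_eq (mulIg (star x)) (star x)) eq_sym (negbTE x_nsym) /= => <-; ring.
Qed.

Lemma mul_star_commute (x : G) : star x != x -> (x * star x = star x * x)%g.
Proof.
move=> x_nsym; apply/eqP; rewrite eq_sym; apply/negPn/negP => ne.
move: (S3_elem_sqr_coef_mul_star x_nsym); rewrite (negbTE ne) /= addr0 mulr1.
by move/eqP; rewrite mulrI_eq0 ?(negbTE two_neq0) //; apply: sigma_lreg.
Qed.

Lemma four_eq0 (x : G) : star x != x -> (4%:R : R) = 0.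
Proof.
move=> x_nsym; move: (S3_elem_sqr_coef_mul_star x_nsym).
rewrite (mul_star_commute x_nsym) eqxx => /eqP; rewrite mulrI_eq0; last exact: sigma_lreg.
by move/eqP <-; rewrite /=; ring.
Qed.

Hypothesis sigmaM : forall x y : G, sigma (x * y)%g = sigma x * sigma y.
Hypothesis sigma_mul_star : forall x : G, sigma (x * star x)%g = 1.

Lemma exists_nonzero_single_in_S (x y : G) : star x != x -> star y = y ->
  exists2 b : R, b != 0 & in_S star sigma [:: (b, y)].
Proof.
move=> x_nsym y_sym.
have sigma_y_sqr : sigma y * sigma y = 1 by rewrite -sigmaM -{2}y_sym sigma_mul_star.
have [sigma_y1 | sigma_y_n1] := eqVneq (sigma y) 1.
  by exists 2%:R => //; apply: S_gen_in_S; left; exists y.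
have [sigma_y_m1 | sigma_y_nm1] := eqVneq (1 + sigma y) 0.
  exists 2%:R => //; apply: S_gen_in_S; right; left; exists y, 2%:R.
  have sigma_y : sigma y = -1 by apply/eqP; rewrite -addr_eq0 addrC sigma_y_m1.
  by do !split => //; rewrite sigma_y -(four_eq0 x_nsym); ring.
exists (1 + sigma y) => //; apply: S_gen_in_S; right; left; exists y, (1 + sigma y).
by do !split => //; rewrite mulrBr mulr1 mulrDl mul1r sigma_y_sqr [1 + _]addrC subrr.
Qed.

Lemma conjg_sym_cases (x y : G) : star x != x -> star y = y ->
  (x ^ y)%g = x \/ (x ^ y)%g = star x.
Proof.
move=> x_nsym y_sym; have [b b_neq0 Sb] := exists_nonzero_single_in_S x_nsym y_sym.
move: (S3_single_anticomm_coef x_nsym Sb).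
case: eqP => [|_]; first by left.
case: eqP => [|_]; first by right.
by rewrite /= mul0r !addr0 mulr1 => b_eq0; rewrite b_eq0 eqxx in b_neq0.
Qed.

Hypothesis starK : involutive star.

Lemma conjg_star (x y : G) : star x != x -> star y = y ->
  (star x ^ y)%g = star (x ^ y)%g.
Proof.
move=> x_nsym y_sym.
have sx_nsym : star (star x) != star x by rewrite starK eq_sym.
have [xy|xy] := conjg_sym_cases x_nsym y_sym;
  have [sxy|sxy] := conjg_sym_cases sx_nsym y_sym; rewrite ?starK in sxy;
  rewrite sxy xy ?starK //;
  by case/eqP: x_nsym; apply: (conjg_inj y); rewrite sxy xy.
Qed.

End Anticommutative.

Theorem lemma3p9 (R : comNzRingType) (G : groupType)
  (star : G -> G) (sigma : G -> R)
  (hchar : (2%:R : R) != 0)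
  (hstarM : forall x y : G, star (x * y)%g = (star y * star x)%g)
  (hstarK : forall x : G, star (star x) = x)
  (hsigU : forall x : G, exists u : R, sigma x * u = 1)
  (hsigM : forall x y : G, sigma (x * y)%g = sigma x * sigma y)
  (hsignt : exists x : G, sigma x != 1)
  (hsigstar : forall x : G, sigma (x * star x)%g = 1)
  (hanti : S_anticomm star sigma)
  (y x : G) (al : R)
  (hy : star y = y) (hx : star x != x)
  (hal : in_S star sigma [:: (al, y)]) :
  [/\ (x ^ y)%g = x \/ (x ^ y)%g = star x,
      star (x * y)%g = (x * y)%g <-> (x * y)%g != (y * x)%g,
      ((x * y)%g != (y * x)%g -> al * (1 + sigma x) = 0) /\
      ((x * y)%g = (y * x)%g -> 2%:R * al = 0) &
      [/\ commg x (y ^+ 2)%g = 1%g, commg (x ^+ 2)%g y = 1%g &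
          commg (x * star x)%g y = 1%g]].
Proof.
have conjg_xy := conjg_sym_cases hsigU hanti hchar hsigM hsigstar hx hy.
have conjg_star_xy := conjg_star hsigU hanti hchar hsigM hsigstar hstarK hx hy.
have coef_xy := S3_single_anticomm_coef hanti hx hal.
rewrite hstarM hy [(x * y)%g]conjgC !(inj_eq (mulgI y)).
have [xyE|xyE] := conjg_xy; rewrite xyE in coef_xy *; split.
- by left.
- by split=> [/mulgI/eqP|]; rewrite ?eqxx // (negbTE hx).
- split=> [|_]; first by rewrite eqxx.
  by rewrite -coef_xy eqxx [x == _]eq_sym (negbTE hx) /=; ring.
- split; apply/eqP; rewrite -conjg_fix.
  + by rewrite expg2 conjgM !xyE.
  + by rewrite conjXg xyE.
  + by rewrite conjMg conjg_star_xy xyE.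
- by right.
- by split=> // _; rewrite hx.
- split=> [_|/mulgI/eqP]; last by rewrite (negbTE hx).
  by rewrite -coef_xy eqxx (negbTE hx) /=; ring.
- split; apply/eqP; rewrite -conjg_fix.
  + by rewrite expg2 conjgM xyE conjg_star_xy xyE hstarK.
  + by rewrite conjXg xyE !expg2 (star_sqr hanti hchar hx).
  + by rewrite conjMg conjg_star_xy xyE hstarK (mul_star_commute hsigU hanti hchar hx).
Qed.
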